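(* There are lattice reduction triples and formulas of mv-ATL*$_\to$ that do not satisfy the translation condition, i.e., for which $[\![\varphi]\!]_{M,\xi}\in f^{-1}(x)$ iff $[\![\varphi]\!]_{f(M),\xi}=x$ fails for some mv-CGS $M$, state or path $\xi$, and value $x$.
   Context: Let $\mathcal{L}=(L,\leq)$ be a finite lattice with meet $\sqcap$, join $\sqcup$, least element $\bot$ and greatest element $\top$; for a family of elements, $\inf$ denotes its greatest lower bound (lattice meet) and $\bigsqcup$ its least upper bound (lattice join). Given a countable set $\mathcal{C}$ of constant symbols, an interpreted lattice is $\mathcal{L}^+=(L,\leq,\sigma)$ with $\sigma:\mathcal{C}\to L$. A multi-valued concurrent game structure (mv-CGS) over $\mathcal{L}^+$ is $M=\langle \mathrm{Agt},Q,Act,d,t,AP,V,\mathcal{L}^+\rangle$ with finite sets of agents, states, actions and atomic propositions, action availability $d$, deterministic transition function $t$, and multi-valued valuation $V:AP\times Q\to L$. Formulas of mv-ATL*$_\to$: state formulas $\varphi::=c\mid p\mid\varphi\wedge\varphi\mid\varphi\vee\varphi\mid\varphi\to\varphi\mid\langle\!\langle A\rangle\!\rangle\gamma\mid[\![A]\!]\gamma$, path formulas $\gamma::=\varphi\mid\gamma\wedge\gamma\mid\gamma\vee\gamma\mid X\gamma\mid\gamma U\gamma\mid\gamma W\gamma$. Semantics: $[\![c]\!]_{M,q}=\sigma(c)$; $[\![p]\!]_{M,q}=V(p,q)$; $\wedge,\vee$ by $\sqcap,\sqcup$; $[\![X\gamma]\!]_{M,\lambda}=[\![\gamma]\!]_{M,\lambda[1..\infty]}$;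 $[\![\gamma_1U\gamma_2]\!]_{M,\lambda}=\bigsqcup_{i\ge 0}\inf_{0\le j<i}\{[\![\gamma_2]\!]_{M,\lambda[i..\infty]}\sqcap[\![\gamma_1]\!]_{M,\lambda[j..\infty]}\}$; $[\![\gamma_1W\gamma_2]\!]_{M,\lambda}=\inf_{i\ge0}[\![\gamma_1]\!]_{M,\lambda[i..\infty]}\sqcup[\![\gamma_1U\gamma_2]\!]_{M,\lambda}$; $[\![\langle\!\langle A\rangle\!\rangle\gamma]\!]_{M,q}=\bigsqcup_{s_A\in\Sigma_A}\inf_{\lambda\in out(q,s_A)}[\![\gamma]\!]_{M,\lambda}$; $[\![[\![A]\!]\gamma]\!]_{M,q}=\inf_{s_A}\bigsqcup_{\lambda\in out(q,s_A)}[\![\gamma]\!]_{M,\lambda}$; $[\![\varphi_1\to\varphi_2]\!]_{M,q}=\top$ if $[\![\varphi_1]\!]_{M,q}\le[\![\varphi_2]\!]_{M,q}$ and $\bot$ otherwise. A lattice reduction triple (LRT) is $(\mathcal{L},\mathcal{L}_f,f)$ where $\mathcal{L}_f=(L_f,\leq_f)$ is a sublattice of $\mathcal{L}$ and $f:L\to L_f$ preserves arbitrary bounds: $f(\inf_{i\in I}x_i)=\inf_{i\in I}f(x_i)$ and $f(\bigsqcup_{i\in I}x_i)=\bigsqcup_{i\in I}f(x_i)$. The image $f(M)$ of an mv-CGS $M$ has the same components except valuation $V_f(p,q)=f(V(p,q))$ and interpreted lattice $(L_f,\leq_f,\sigma_f)$ with $\sigma_f(c)=f(\sigma(c))$. A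 formula $\varphi$ satisfies the translation condition if for every state (resp. path) $\xi$: $[\![\varphi]\!]_{M,\xi}\in f^{-1}(x)$ iff $[\![\varphi]\!]_{f(M),\xi}=x$. *)

From HB Require Import structures.
From mathcomp Require Import all_boot all_order.
From mathcomp Require Import boolp.
Set Implicit Arguments. Unset Strict Implicit. Unset Printing Implicit Defensive.
Import Order.Theory.
Local Open Scope order_scope.

Definition linf {d} {L : finTBLatticeType d} (P : L -> Prop) : L :=
  \meet_(x : L | `[< P x >]) x.
Definition lsup {d} {L : finTBLatticeType d} (P : L -> Prop) : L :=
  \join_(x : L | `[< P x >]) x.

Inductive sform (Agt AP C : Type) : Type :=
| SConst : C -> sform Agt AP C
| SAtom : AP -> sform Agt AP C
| SAnd : sform Agt AP C -> sform Agt AP C -> sform Agt AP C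
| SOr : sform Agt AP C -> sform Agt AP C -> sform Agt AP C
| SImp : sform Agt AP C -> sform Agt AP C -> sform Agt AP C
| SEx : (Agt -> Prop) -> pform Agt AP C -> sform Agt AP C
| SAll : (Agt -> Prop) -> pform Agt AP C -> sform Agt AP C
with pform (Agt AP C : Type) : Type :=
| PState : sform Agt AP C -> pform Agt AP C
| PAnd : pform Agt AP C -> pform Agt AP C -> pform Agt AP C
| POr : pform Agt AP C -> pform Agt AP C -> pform Agt AP C
| PX : pform Agt AP C -> pform Agt AP C
| PU : pform Agt AP C -> pform Agt AP C -> pform Agt AP C
| PW : pform Agt AP C -> pform Agt AP C -> pform Agt AP C.

Record mvCGS (Agt Q Act AP : finType) (C : countType) d (L : finTBLatticeType d) := {
  avail : Agt -> Q -> {set Act};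
  avail_nonempty : forall a q, avail a q != set0;
  trans : Q -> (Agt -> Act) -> Q;
  val : AP -> Q -> L;
  sigma : C -> L
}.

Section Semantics.
Variables (Agt Q Act AP : finType) (C : countType) (d : Order.disp_t)
          (L : finTBLatticeType d) (M : mvCGS Agt Q Act AP C L).

Definition cpath := nat -> Q.
Definition suffix (lam : cpath) (i : nat) : cpath := fun n => lam (i + n).
Definition prefix (lam : cpath) (i : nat) : seq Q := [seq lam j | j <- iota 0 i.+1].

(* perfect-recall strategies; a strategy profile for coalition A assigns to
   each agent of A a function from nonempty histories to available actions *)
Definition strategy := Agt -> seq Q -> Act.
Definition is_strat (A : Agt -> Prop) (s : strategy) : Prop :=
  forall a, A a -> forall h q, s a (rcons h q) \in avail M a q.

Definition out (q : Q) (A : Agt -> Prop) (s : strategy) (lam : cpath) : Prop :=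
  lam 0 = q /\
  forall i, exists m : Agt -> Act,
    (forall a, m a \in avail M a (lam i)) /\
    (forall a, A a -> m a = s a (prefix lam i)) /\
    lam i.+1 = trans M (lam i) m.

Fixpoint sem_s (phi : sform Agt AP C) (q : Q) {struct phi} : L :=
  match phi with
  | SConst c => sigma M c
  | SAtom p => val M p q
  | SAnd a b => sem_s a q `&` sem_s b q
  | SOr a b => sem_s a q `|` sem_s b q
  | SImp a b => if sem_s a q <= sem_s b q then \top else \bot
  | SEx A g => lsup (fun v => exists s, is_strat A s /\
                 v = linf (fun w => exists lam, out q A s lam /\ w = sem_p g lam))
  | SAll A g => linf (fun v => exists s, is_strat A s /\
                 v = lsup (fun w => exists lam, out q A s lam /\ w = sem_p g lam))
  end
with sem_p (g : pform Agt AP C) (lam : cpath) {struct g} : L :=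
  match g with
  | PState phi => sem_s phi (lam 0)
  | PAnd a b => sem_p a lam `&` sem_p b lam
  | POr a b => sem_p a lam `|` sem_p b lam
  | PX a => sem_p a (suffix lam 1)
  | PU a b => lsup (fun v => exists i, v = sem_p b (suffix lam i) `&`
                 linf (fun w => exists j, (j < i)%N /\ w = sem_p a (suffix lam j)))
  | PW a b => linf (fun v => exists i, v = sem_p a (suffix lam i)) `|`
              lsup (fun v => exists i, v = sem_p b (suffix lam i) `&`
                 linf (fun w => exists j, (j < i)%N /\ w = sem_p a (suffix lam j)))
  end.
End Semantics.

(* Lattice reduction triple (L, L_f, f): L_f is (up to the embedding iota) a
   sublattice of L, and f : L -> L_f preserves arbitrary meets and joins.
   Arbitrary families in a finite lattice are captured by arbitrary subsets. *)
Definition sublattice_emb {d d'} {L : finTBLatticeType d} {Lf : finTBLatticeType d'}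
  (iota : Lf -> L) : Prop :=
  injective iota /\ {morph iota : x y / x `&` y} /\ {morph iota : x y / x `|` y}.

Definition preserves_bounds {d d'} {L : finTBLatticeType d} {Lf : finTBLatticeType d'}
  (f : L -> Lf) : Prop :=
  forall A : {set L},
    f (\meet_(x in A) x) = \meet_(x in A) f x /\
    f (\join_(x in A) x) = \join_(x in A) f x.

Definition LRT {d d'} {L : finTBLatticeType d} {Lf : finTBLatticeType d'}
  (iota : Lf -> L) (f : L -> Lf) : Prop :=
  sublattice_emb iota /\ preserves_bounds f.

Definition image_mv {Agt Q Act AP : finType} {C : countType} {d d'}
  {L : finTBLatticeType d} {Lf : finTBLatticeType d'} (f : L -> Lf)
  (M : mvCGS Agt Q Act AP C L) : mvCGS Agt Q Act AP C Lf :=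
  {| avail := avail M; avail_nonempty := @avail_nonempty _ _ _ _ _ _ _ M;
     trans := trans M;
     val := fun p q => f (val M p q);
     sigma := fun c => f (sigma M c) |}.

(* A lattice reduction triple preserves meets and joins, but nothing forces f
   to reflect the order, while the implication of mv-ATL*_-> is a two-valued
   order test.  Take L = bool x bool, L_f = bool embedded diagonally, and f the
   first projection: (0,1) is not below (0,0) in L, but both project to 0, so
   for constants with these values [c1 -> c2] is \bot in M and \top in f(M),
   whereas f \bot = 0 <> \top. *)
From HB Require Import structures.
From mathcomp Require Import all_boot all_order.
From mathcomp Require Import boolp.
Import Order.Theory.
Local Open Scope order_scope.

Lemma fst_preserves_bounds {d1 d2} (T1 : finTBLatticeType d1) (T2 : finTBLatticeType d2) :
  preserves_bounds (fun x : T1 *p T2 => x.1).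
Proof.
move=> A; split.
  by apply: (big_morph _ _ (erefl _)) => x y; rewrite meetEprod.
by apply: (big_morph _ _ (erefl _)) => x y; rewrite joinEprod.
Qed.

Definition diag {d} (T : finTBLatticeType d) (x : T) : T *p T := (x, x).

Lemma diag_sublattice_emb {d} (T : finTBLatticeType d) : sublattice_emb (@diag _ T).
Proof.
split; first by move=> x y [].
by split=> x y; rewrite /diag ?meetEprod ?joinEprod.
Qed.

Lemma LRT_diag_fst {d} (T : finTBLatticeType d) :
  LRT (@diag _ T) (fun x : T *p T => x.1).
Proof. by split; [exact: diag_sublattice_emb | exact: fst_preserves_bounds]. Qed.

Section ImplicationFailure.
Variables (Agt Q Act AP : finType) (C : countType) (d d' : Order.disp_t).
Variables (L : finTBLatticeType d) (Lf : finTBLatticeType d').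
Variables (M : mvCGS Agt Q Act AP C L) (f : L -> Lf).

Definition const_imp (c1 c2 : C) : sform Agt AP C :=
  SImp (SConst Agt AP c1) (SConst Agt AP c2).

Lemma translation_fails_const_imp c1 c2 q :
  ~~ (sigma M c1 <= sigma M c2) -> f (sigma M c1) <= f (sigma M c2) ->
  f \bot != \top ->
  ~ (f (sem_s M (const_imp c1 c2) q) = f \bot <->
     sem_s (image_mv f M) (const_imp c1 c2) q = f \bot).
Proof.
move=> /negbTE not_le f_le f_bot_ne_top [to_image _].
have sem_M : sem_s M (const_imp c1 c2) q = \bot by rewrite /= not_le.
have sem_fM : sem_s (image_mv f M) (const_imp c1 c2) q = \top by rewrite /= f_le.
by move: f_bot_ne_top; rewrite -sem_fM to_image ?sem_M ?eqxx.
Qed.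

End ImplicationFailure.

Definition avail_all (a q : unit) : {set unit} := setT.

Lemma avail_all_nonempty a q : avail_all a q != set0.
Proof. by apply/set0Pn; exists tt. Qed.

Definition one_state_mvCGS {d} (L : finTBLatticeType d) (s : bool -> L) :
  mvCGS unit unit unit unit bool L :=
  Build_mvCGS avail_all_nonempty (fun q _ => q) (fun _ _ => \bot) s.

Theorem proposition5p8 :
  exists (d d' : Order.disp_t) (L : finTBLatticeType d) (Lf : finTBLatticeType d')
         (iota : Lf -> L) (f : L -> Lf),
    LRT iota f /\
    exists (Agt Q Act AP : finType) (C : countType) (M : mvCGS Agt Q Act AP C L),
      (exists (phi : sform Agt AP C) (q : Q) (x : Lf),
         ~ (f (sem_s M phi q) = x <-> sem_s (image_mv f M) phi q = x)) \/
      (exists (g : pform Agt AP C) (lam : cpath Q) (x : Lf),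
         ~ (f (sem_p M g lam) = x <-> sem_p (image_mv f M) g lam = x)).
Proof.
pose f (x : bool *p bool) := x.1.
exists _, _, (bool *p bool)%type, bool, (@diag _ bool), f.
split; first exact: LRT_diag_fst.
pose M := one_state_mvCGS (bool *p bool)%type
  (fun c : bool => if c then (false, true) else (false, false)).
exists unit, unit, unit, unit, bool, M; left.
exists (const_imp _ _ _ true false), tt, (f \bot).
exact: translation_fails_const_imp.
Qed.
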